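(* Let $A_1,\ldots,A_N$ be rank-deficient real matrices, each with columns of Euclidean norm $1$. Then \[ \mathrm{spark}(A_1\otimes\cdots\otimes A_N)=\min_{1\le i\le N}\mathrm{spark}(A_i). \]
   Context: $\otimes$ denotes the Kronecker product: for $A\in\mathbb{R}^{p,q}$, $B\in\mathbb{R}^{r,s}$, $A\otimes B\in\mathbb{R}^{pr,qs}$ is the block matrix with $(i,j)$ block $a_{i,j}B$. A matrix is rank-deficient if its rank is less than the minimum of its numbers of rows and columns. The spark of a matrix whose columns are linearly dependent is the smallest cardinality of a linearly dependent subset of its columns. *)

From HB Require Import structures.
From mathcomp Require Import all_boot all_order all_algebra.
From mathcomp Require Import mxtens.
From mathcomp Require Import all_classical all_reals.
Set Implicit Arguments. Unset Strict Implicit. Unset Printing Implicit Defensive.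
Import Order.TTheory GRing.Theory Num.Theory.
Local Open Scope ring_scope.

(* The columns of A indexed by the set S are linearly dependent
   (as an indexed family: repeated columns count as dependent). *)
Definition cols_dependent (F : fieldType) (m n : nat) (A : 'M[F]_(m, n))
    (S : {set 'I_n}) : bool :=
  ~~ free [seq col j A | j <- enum S].

(* spark A = smallest cardinality of a linearly dependent set of columns.
   (Only meaningful when the columns are dependent; the default value n.+1
   for matrices with independent columns is never used in the statement.) *)
Definition spark (F : fieldType) (m n : nat) (A : 'M[F]_(m, n)) : nat :=
  \big[minn/n.+1]_(S : {set 'I_n} | cols_dependent A S) #|S|.

Definition rank_deficient (F : fieldType) (m n : nat) (A : 'M[F]_(m, n)) : bool :=
  (\rank A < minn m n)%N.

Definition unit_columns (R : realType) (m n : nat) (A : 'M[R]_(m, n)) : Prop :=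
  forall j : 'I_n, \sum_(i < m) A i j ^+ 2 = 1.

Fixpoint prod_dim (d : nat -> nat) (N : nat) : nat :=
  match N with 0 => 1%N | k.+1 => (prod_dim d k * d k)%N end.

(* iterated Kronecker product ((1 ⊗ A_0) ⊗ A_1) ⊗ ... ⊗ A_{N-1}, using
   mxtens's tensmx (row index i*p + j, the standard Kronecker convention) *)
Fixpoint kron_iter (R : comPzRingType) (p q : nat -> nat)
    (A : forall i, 'M[R]_(p i, q i)) (N : nat)
    : 'M[R]_(prod_dim p N, prod_dim q N) :=
  match N with
  | 0 => 1%:M
  | k.+1 => kron_iter A k *t A k
  end.

From HB Require Import structures.
From mathcomp Require Import all_boot all_order all_algebra.
From mathcomp Require Import mxtens.
From mathcomp Require Import all_classical all_reals.
Import Order.TTheory GRing.Theory Num.Theory.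
Local Open Scope ring_scope.
Set Implicit Arguments. Unset Strict Implicit. Unset Printing Implicit Defensive.

(* A kernel vector x of B ⊗ C, reshaped into a matrix X, satisfies B X C^T = 0.
   If B X = 0, a nonzero column of X is a kernel vector of B; otherwise a nonzero
   row of B X gives a kernel vector of C.  Either way its support is no larger
   than that of x, so spark (B ⊗ C) >= min (spark B, spark C).  Conversely, if
   B y = 0 then y ⊗ e_j lies in the kernel of B ⊗ C with the same support.
   Rank deficiency only serves to make every spark finite (attained by a
   dependent set of columns). *)

Lemma bigmin_le_cond (I : finType) (P : pred I) (F : I -> nat) x i :
  P i -> (\big[minn/x]_(j | P j) F j <= F i)%N.
Proof.
move=> Pi; rewrite unlock; elim: (index_enum I) (mem_index_enum i) => //= j r IH.
rewrite inE => /predU1P[<-|ri]; first by rewrite Pi geq_minl.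
by case: (P j); rewrite ?geq_min IH ?orbT.
Qed.

Section Spark.
Variable F : fieldType.

Definition vsupp n (x : 'cV[F]_n) : {set 'I_n} := [set j | x j 0 != 0].

Lemma cV_entry_neq0 n (x : 'cV[F]_n) : x != 0 -> exists j, x j 0 != 0.
Proof.
move=> x0; apply/existsP; apply: contraNT x0 => /existsPn x0.
by apply/eqP/colP => j; rewrite mxE; apply/eqP/negbNE.
Qed.

Lemma mx_neq0_col m n (X : 'M[F]_(m, n)) : X != 0 -> exists j, col j X != 0.
Proof.
move=> X0; apply/existsP; apply: contraNT X0 => /existsPn X0.
apply/eqP/matrixP => i j; have /eqP/colP/(_ i) := negbNE (X0 j).
by rewrite !mxE.
Qed.

Lemma col_mulmx m n p j (A : 'M[F]_(m, n)) (B : 'M_(n, p)) :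
  col j (A *m B) = A *m col j B.
Proof. by rewrite !colE mulmxA. Qed.

Lemma mulmx_sum_col m n (M : 'M[F]_(m, n)) (x : 'cV_n) (S : {set 'I_n}) :
  vsupp x \subset S -> M *m x = \sum_(j in S) x j 0 *: col j M.
Proof.
move=> /fintype.subsetP xS.
have -> : M *m x = \sum_j x j 0 *: col j M.
  by apply/colP => i; rewrite !mxE summxE; apply: eq_bigr => j _; rewrite !mxE mulrC.
rewrite (bigID (mem S)) /= [X in _ + X]big1 ?addr0 // => j jS.
suff -> : x j 0 = 0 by rewrite scale0r.
by apply/eqP; apply: contraNT jS => xj; apply: xS; rewrite inE.
Qed.

Lemma cols_dependentP m n (M : 'M[F]_(m, n)) (S : {set 'I_n}) :
  reflect (exists x : 'cV_n, [/\ x != 0, M *m x = 0 & vsupp x \subset S])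
          (cols_dependent M S).
Proof.
set t := in_tuple (enum S); set s := map_tuple (fun j => col j M) t.
have t_inj : injective (tnth t) by apply/tuple_uniqP/enum_uniq.
have sumE (k : 'I_(size t) -> F) :
    \sum_i k i *: s`_i = \sum_i k i *: col (tnth t i) M.
  by apply: eq_bigr => i _; rewrite -tnth_nth tnth_map.
have -> : cols_dependent M S = ~~ free s by [].
apply: (iffP (negPP (freeP (X := s)))).
  move=> /existsNP[k /not_implyP[sum0 /existsNP[i0 ki0]]].
  pose x := \sum_i k i *: (delta_mx (tnth t i) 0 : 'cV_n).
  have xE j : x j 0 = \sum_i k i * (j == tnth t i)%:R.
    by rewrite summxE; apply: eq_bigr => i _; rewrite !mxE eqxx andbT.
  exists x; split.
  - apply: contra_notN ki0 => /eqP/colP/(_ (tnth t i0)); rewrite xE mxE.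
    rewrite (bigD1 i0) //= eqxx mulr1 big1 ?addr0 // => i ii0.
    rewrite (_ : (_ == _) = false) ?mulr0 //; apply/negbTE; apply: contra ii0.
    by move=> /eqP/esym/t_inj ->.
  - rewrite -sum0 sumE mulmx_sumr; apply: eq_bigr => i _.
    by rewrite -scalemxAr -colE.
  - apply/fintype.subsetP => j; rewrite inE xE; apply: contraR => jS.
    rewrite big1 // => i _; case: eqP => [ji | _]; last by rewrite mulr0.
    by case/negP: jS; rewrite ji -mem_enum mem_tnth.
move=> [x [x0 Mx0 /fintype.subsetP xS]] s_free.
have [j0 xj0] := cV_entry_neq0 x0.
have /tnthP[i0 j0E] : j0 \in t by rewrite mem_enum xS // inE.
rewrite j0E in xj0; apply/(negP xj0)/eqP.
apply: (s_free (fun i => x (tnth t i) 0) _ i0).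
rewrite sumE -(big_tnth _ _ _ xpredT (fun j => x j 0 *: col j M)) big_enum /=.
by rewrite -(mulmx_sum_col M (introT fintype.subsetP xS)).
Qed.

Definition sparse_kernel m n (M : 'M[F]_(m, n)) (k : nat) : Prop :=
  exists x : 'cV_n, [/\ x != 0, M *m x = 0 & (#|vsupp x| <= k)%N].

Lemma spark_le_card m n (M : 'M[F]_(m, n)) S :
  cols_dependent M S -> (spark M <= #|S|)%N.
Proof. exact: bigmin_le_cond. Qed.

Lemma spark_attained m n (M : 'M[F]_(m, n)) S :
  cols_dependent M S -> exists2 S0, cols_dependent M S0 & spark M = #|S0|.
Proof.
move=> dep.
have [S0 dep0 minS0] := @arg_minnP _ _ (cols_dependent M) (fun S => #|S|) dep.
exists S0 => //; apply/eqP; rewrite eqn_leq spark_le_card //=.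
apply: (big_ind (fun k => #|S0| <= k)%N) => [|k1 k2|S1 /minS0] //.
- by rewrite ltnW // ltnS -[n in (_ <= n)%N]card_ord max_card.
- by rewrite leq_min => -> ->.
Qed.

Lemma sparse_kernel_dependent m n (M : 'M[F]_(m, n)) (x : 'cV_n) :
  x != 0 -> M *m x = 0 -> cols_dependent M (vsupp x).
Proof. by move=> x0 Mx0; apply/cols_dependentP; exists x. Qed.

Lemma spark_le m n (M : 'M[F]_(m, n)) k :
  sparse_kernel M k -> (spark M <= k)%N.
Proof.
move=> [x [x0 Mx0 xk]].
exact: leq_trans (spark_le_card (sparse_kernel_dependent x0 Mx0)) xk.
Qed.

Lemma sparse_kernel_spark m n (M : 'M[F]_(m, n)) k :
  sparse_kernel M k -> sparse_kernel M (spark M).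
Proof.
move=> [x [x0 Mx0 _]].
have [S dep ->] := spark_attained (sparse_kernel_dependent x0 Mx0).
have [y [y0 My0 yS]] := cols_dependentP _ _ dep.
by exists y; split; rewrite ?subset_leq_card.
Qed.

Lemma sparse_kernel_rank_lt m n (M : 'M[F]_(m, n)) :
  (\rank M < n)%N -> sparse_kernel M n.
Proof.
move=> rkM; have : cokermx M != 0 by rewrite -mxrank_eq0 mxrank_coker subn_eq0 -ltnNge.
case/mx_neq0_col => j Kj0; exists (col j (cokermx M)); split => //.
  by rewrite -col_mulmx mulmx_coker col0.
by rewrite -[n in (_ <= n)%N]card_ord max_card.
Qed.

Lemma tensmx_cVE n1 n2 (x : 'cV[F]_n1) (y : 'cV[F]_n2) i j :
  (x *t y : 'cV_(n1 * n2)) (mxtens_index (i, j)) 0 = x i 0 * y j 0.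
Proof. by rewrite mxE mxtens_indexK !ord1. Qed.

Lemma card_vsupp_tensmx n1 n2 (x : 'cV[F]_n1) (y : 'cV[F]_n2) :
  #|vsupp (x *t y : 'cV_(n1 * n2))| = (#|vsupp x| * #|vsupp y|)%N.
Proof.
rewrite -cardsX -(card_imset (finset.setX _ _) (can_inj (@mxtens_indexK n1 n2))).
apply/eq_card => k; case: (mxtens_indexP k) => i j.
rewrite mem_imset ?inE; last exact: can_inj (@mxtens_indexK n1 n2).
by rewrite tensmx_cVE mulf_eq0 negb_or.
Qed.

Lemma tensmx_cV_neq0 n1 n2 (x : 'cV[F]_n1) (y : 'cV[F]_n2) :
  x != 0 -> y != 0 -> (x *t y : 'cV_(n1 * n2)) != 0.
Proof.
move=> /cV_entry_neq0[i xi] /cV_entry_neq0[j yj].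
apply/eqP => /colP/(_ (mxtens_index (i, j)))/eqP; rewrite tensmx_cVE mxE.
by rewrite mulf_eq0 (negPf xi) (negPf yj).
Qed.

Lemma delta_cV_neq0 n (c : 'I_n) : (delta_mx c 0 : 'cV[F]_n) != 0.
Proof. by apply/eqP => /colP/(_ c)/eqP; rewrite !mxE !eqxx oner_eq0. Qed.

Lemma card_vsupp_delta n (c : 'I_n) : #|vsupp (delta_mx c 0 : 'cV[F]_n)| = 1%N.
Proof.
rewrite -[RHS](cards1 c); apply: eq_card => j; rewrite !inE mxE eqxx andbT.
by case: (j == c); rewrite ?oner_eq0 ?eqxx.
Qed.

Lemma sparse_kernel_tensmxl m1 n1 m2 n2 (B : 'M[F]_(m1, n1)) (C : 'M[F]_(m2, n2)) k :
  (0 < n2)%N -> sparse_kernel B k -> sparse_kernel (B *t C) k.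
Proof.
move=> n2_gt0 [x [x0 Bx0 xk]]; pose e : 'cV[F]_n2 := delta_mx (Ordinal n2_gt0) 0.
exists (x *t e); split.
- exact: tensmx_cV_neq0 x0 (delta_cV_neq0 _).
- by have := tensmx_mul B C x e; rewrite Bx0 tens0mx.
- by rewrite card_vsupp_tensmx card_vsupp_delta muln1.
Qed.

Lemma sparse_kernel_tensmxr m1 n1 m2 n2 (B : 'M[F]_(m1, n1)) (C : 'M[F]_(m2, n2)) k :
  (0 < n1)%N -> sparse_kernel C k -> sparse_kernel (B *t C) k.
Proof.
move=> n1_gt0 [y [y0 Cy0 yk]]; pose e : 'cV[F]_n1 := delta_mx (Ordinal n1_gt0) 0.
exists (e *t y); split.
- exact: tensmx_cV_neq0 (delta_cV_neq0 _) y0.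
- by have := tensmx_mul B C e y; rewrite Cy0 tensmx0.
- by rewrite card_vsupp_tensmx card_vsupp_delta mul1n.
Qed.

Definition mxtens_unvec n1 n2 (x : 'cV[F]_(n1 * n2)) : 'M[F]_(n1, n2) :=
  \matrix_(i, j) x (mxtens_index (i, j)) 0.

Lemma mxtens_unvec_eq0 n1 n2 (x : 'cV[F]_(n1 * n2)) :
  (mxtens_unvec x == 0) = (x == 0).
Proof.
apply/eqP/eqP => [X0 | ->]; last by apply/matrixP => i j; rewrite !mxE.
apply/colP => k; case: (mxtens_indexP k) => i j.
by have /matrixP/(_ i j) := X0; rewrite !mxE.
Qed.

Lemma tensmx_mulmx_unvec m1 n1 m2 n2 (B : 'M[F]_(m1, n1)) (C : 'M[F]_(m2, n2))
    (x : 'cV_(n1 * n2)) a b :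
  ((B *t C) *m x) (mxtens_index (a, b)) 0 = (B *m mxtens_unvec x *m C^T) a b.
Proof.
rewrite !mxE (reindex (@mxtens_index n1 n2)) /=; last first.
  by exists (@mxtens_unindex n1 n2) => k _; rewrite ?mxtens_indexK ?mxtens_unindexK.
transitivity (\sum_i \sum_j B a i * mxtens_unvec x i j * C b j).
  by rewrite pair_big; apply: eq_bigr => [[i j]] _; rewrite tensmxE !mxE mulrAC.
rewrite exchange_big; apply: eq_bigr => j _.
by rewrite !mxE mulr_suml; apply: eq_bigr => i _; rewrite !mxE.
Qed.

Lemma sparse_kernel_tensmx m1 n1 m2 n2 (B : 'M[F]_(m1, n1)) (C : 'M[F]_(m2, n2)) k :
  sparse_kernel (B *t C) k -> sparse_kernel B k \/ sparse_kernel C k.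
Proof.
move=> [x [x0 Kx0 xk]]; set X := mxtens_unvec x.
have BXC0 : B *m X *m C^T = 0.
  by apply/matrixP => a b; rewrite -tensmx_mulmx_unvec Kx0 !mxE.
have card_le p (y : 'cV_p) (f : 'I_(n1 * n2) -> 'I_p) :
    vsupp y \subset f @: vsupp x -> (#|vsupp y| <= k)%N.
  by move/subset_leq_card/leq_trans; apply; apply: leq_trans (leq_imset_card _ _) xk.
have [BX0 | BX_neq0] := eqVneq (B *m X) 0.
  have [j Xj] : exists j, col j X != 0 by apply: mx_neq0_col; rewrite mxtens_unvec_eq0.
  left; exists (col j X); split=> //; first by rewrite -col_mulmx BX0 col0.
  apply: (card_le _ _ (fun k => (mxtens_unindex k).1)).
  apply/fintype.subsetP => i; rewrite !inE !mxE => Xij.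
  by apply/imsetP; exists (mxtens_index (i, j)); rewrite ?inE ?mxtens_indexK.
have [a BXa] : exists a, col a (B *m X)^T != 0.
  by apply: mx_neq0_col; rewrite trmx_eq0.
right; exists (col a (B *m X)^T); split=> //.
  by rewrite -col_mulmx -[C]trmxK -trmx_mul BXC0 trmx0 col0.
apply: (card_le _ _ (fun k => (mxtens_unindex k).2)).
apply/fintype.subsetP => j; rewrite !inE !mxE => BXaj.
have [i Xij] : exists i, X i j != 0.
  apply/existsP; apply: contraNT BXaj => /existsPn Xj0.
  by apply/eqP/big1 => i _; rewrite (eqP (negbNE (Xj0 i))) mulr0.
rewrite mxE in Xij.
by apply/imsetP; exists (mxtens_index (i, j)); rewrite ?inE ?mxtens_indexK.
Qed.

End Spark.

Lemma prod_dim_gt0 (d : nat -> nat) N :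
  (forall i, (i < N)%N -> (0 < d i)%N) -> (0 < prod_dim d N)%N.
Proof.
elim: N => [//|N IH] d_gt0 /=.
by rewrite muln_gt0 d_gt0 // IH // => i /ltnW; apply: d_gt0.
Qed.

Lemma sparse_kernel_kron_iter_factor (F : fieldType) (p q : nat -> nat)
    (A : forall i, 'M[F]_(p i, q i)) N k :
  sparse_kernel (kron_iter A N) k -> exists2 i, (i < N)%N & sparse_kernel (A i) k.
Proof.
elim: N => [[x [x0 Kx0 _]] | N IH /sparse_kernel_tensmx[/IH[i iN Ai] | AN]].
- by case/eqP: x0; rewrite -Kx0 mul1mx.
- by exists i => //; apply: ltnW.
- by exists N.
Qed.

Lemma sparse_kernel_kron_iter (F : fieldType) (p q : nat -> nat)
    (A : forall i, 'M[F]_(p i, q i)) N k i :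
  (forall j, (j < N)%N -> (0 < q j)%N) -> (i < N)%N -> sparse_kernel (A i) k ->
  sparse_kernel (kron_iter A N) k.
Proof.
elim: N => [//|N IH] q_gt0 iN Ai /=.
have q_gt0' j : (j < N)%N -> (0 < q j)%N by move/ltnW; apply: q_gt0.
have [iE | iN'] := eqVneq i N.
  by rewrite iE in Ai; apply: sparse_kernel_tensmxr; rewrite ?prod_dim_gt0.
apply: sparse_kernel_tensmxl; first exact: q_gt0.
by apply: IH => //; rewrite ltn_neqAle iN' -ltnS.
Qed.

Theorem corollary3p2 (R : realType) (N : nat) (p q : nat -> nat)
    (A : forall i : nat, 'M[R]_(p i, q i)) :
  (0 < N)%N ->
  (forall i, (i < N)%N -> rank_deficient (A i)) ->
  (forall i, (i < N)%N -> unit_columns (A i)) ->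
  (forall i, (i < N)%N -> (spark (kron_iter A N) <= spark (A i))%N) /\
  (exists2 i, (i < N)%N & spark (kron_iter A N) = spark (A i)).
Proof.
move=> N_gt0 rank_def _.
have rank_lt i : (i < N)%N -> (\rank (A i) < q i)%N.
  by move/rank_def/leq_trans; apply; apply: geq_minr.
have q_gt0 i : (i < N)%N -> (0 < q i)%N by move/rank_lt; apply: leq_ltn_trans.
have kerA i : (i < N)%N -> sparse_kernel (A i) (spark (A i)).
  by move/rank_lt/sparse_kernel_rank_lt/sparse_kernel_spark.
have spark_le_factor i : (i < N)%N -> (spark (kron_iter A N) <= spark (A i))%N.
  by move=> iN; apply/spark_le/(sparse_kernel_kron_iter q_gt0 iN)/kerA.
split=> //.
have /sparse_kernel_spark/sparse_kernel_kron_iter_factor[i iN kerAi] :=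
  sparse_kernel_kron_iter q_gt0 N_gt0 (kerA 0%N N_gt0).
by exists i => //; apply/eqP; rewrite eqn_leq spark_le_factor // spark_le.
Qed.
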